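(* There exists a locally compact groupoid $G$ over a base space $X$, with $G$ even compact, whose range map $r:G\to X$ is open, but such that $G$ admits no Haar system.
   Context: A groupoid over a set $X$ is a small category with object set $X$ in which every arrow is invertible; $G$ denotes its set of arrows, with range and source maps $r,s:G\to X$, identity map $\varepsilon:X\to G$, composition $m$ defined on the set $G^{(2)}=\{(\alpha,\beta)\in G\times G: s(\alpha)=r(\beta)\}$ of composable pairs, and inversion $\iota$. A topological groupoid is a groupoid with topologies on $G$ and $X$ making $r,s,\varepsilon,m,\iota$ continuous ($G^{(2)}$ carries the subspace topology of $G\times G$). A locally compact groupoid is a topological groupoid in which $G$ and $X$ are locally compact Hausdorff spaces. For $x\in X$ write $G^x=\{g\in G: r(g)=x\}$ and $G_y^x=\{g\in G: s(g)=y,\ r(g)=x\}$. A Haar system on a locally compact groupoid $G$ is a family $(\mu^x)_{x\in X}$ of Radon measures on $G$ such that (a) $\operatorname{supp}(\mu^x)=G^x$ for every $x\in X$; (b) $\int_G\phi(\alpha g)\,d\mu^{y}(g)=\int_G\phi(g)\,d\mu^{x}(g)$ for every $\phi\in C_c(G)$ and every $\alpha\in G_y^x$; (c) for every $\phi\in C_c(G)$ the map $x\mapsto\int_G\phi(g)\,d\mu^x(g)$ is continuous on $X$. *)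

From HB Require Import structures.
From mathcomp Require Import all_boot all_order all_algebra.
From mathcomp Require Import all_classical all_reals all_analysis.
From mathcomp Require Import Rstruct Rstruct_topology.
From Stdlib Require Import Rdefinitions.

Set Implicit Arguments.
Unset Strict Implicit.
Unset Printing Implicit Defensive.

Import Order.TTheory GRing.Theory Num.Theory.
Local Open Scope classical_set_scope.
Local Open Scope ring_scope.

Notation RR := Rdefinitions.R.

Definition Borel (T : ptopologicalType) := g_sigma_algebraType (@open T).

Notation borel_measure T := {measure set (Borel T) -> \bar RR}.

Definition radon (T : ptopologicalType) (mu : borel_measure T) : Prop :=
  [/\ (forall K : set T, compact K -> (mu K < +oo)%E),
      (forall E : set (Borel T), measurable E ->
         mu E = ereal_inf [set mu U | U in [set U : set T | open U /\ E `<=` U]]) &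
      (forall U : set T, open U ->
         mu U = ereal_sup [set mu K | K in [set K : set T | compact K /\ K `<=` U]])].

Definition msupport (T : ptopologicalType) (mu : borel_measure T) : set T :=
  [set g | forall U : set T, open U -> U g -> (0 < mu U)%E].

Definition Cc (T : ptopologicalType) (phi : T -> RR) : Prop :=
  continuous phi /\ compact (closure [set t | phi t != 0]).

(* Topological groupoid with arrow space G and object space X:
   range r, source s, identity map e, composition m (only meaningful on
   composable pairs G^(2) = {(a,b) | s a = r b}), inversion i. *)
Definition groupoid (G X : Type) (r s : G -> X) (e : X -> G)
    (m : G -> G -> G) (i : G -> G) : Prop :=
  [/\ (forall a b, s a = r b -> r (m a b) = r a /\ s (m a b) = s b),
      (forall a b c, s a = r b -> s b = r c -> m (m a b) c = m a (m b c)),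
      (forall x, r (e x) = x /\ s (e x) = x),
      (forall g, m (e (r g)) g = g /\ m g (e (s g)) = g) &
      (forall g, r (i g) = s g /\ s (i g) = r g /\
                 m g (i g) = e (r g) /\ m (i g) g = e (s g))].

Definition topological_groupoid (G X : ptopologicalType) (r s : G -> X)
    (e : X -> G) (m : G -> G -> G) (i : G -> G) : Prop :=
  groupoid r s e m i /\ continuous r /\ continuous s /\ continuous e /\
  {within [set p : G * G | s p.1 = r p.2], continuous (fun p => m p.1 p.2)} /\
  continuous i.

Definition locally_compact_groupoid (G X : ptopologicalType) (r s : G -> X)
    (e : X -> G) (m : G -> G -> G) (i : G -> G) : Prop :=
  [/\ topological_groupoid r s e m i,
      hausdorff_space G, locally_compact [set: G],
      hausdorff_space X & locally_compact [set: X]].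

Definition open_map (A B : topologicalType) (f : A -> B) : Prop :=
  forall U : set A, open U -> open (f @` U).

Definition haar_system (G X : ptopologicalType) (r s : G -> X)
    (m : G -> G -> G) (mu : X -> borel_measure G) : Prop :=
  [/\ (forall x, radon (mu x)),
      (forall x, msupport (mu x) = [set g | r g = x]),
      (forall (phi : G -> RR) (a : G), Cc phi ->
         (\int[mu (s a)]_g (phi (m a g))%:E = \int[mu (r a)]_g (phi g)%:E)%E) &
      (forall phi : G -> RR, Cc phi ->
         continuous (fun x => fine (\int[mu x]_g (phi g)%:E)%E))].

(* The counterexample is the pair groupoid X * X over the one-point
   compactification X of an uncountable discrete space.  A Haar measure mu^x
   is finite, since X * X is compact, and has support {x} * X, so it charges
   each of the pairwise disjoint open sets X * {d}, d isolated in X.  A finite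
   measure charges only countably many disjoint sets, whereas X has
   uncountably many isolated points. *)

From HB Require Import structures.
From mathcomp Require Import all_boot all_order all_algebra.
From mathcomp Require Import all_classical all_reals all_analysis.
From mathcomp Require Import Rstruct unstable finmap.

Import Order.TTheory GRing.Theory Num.Theory.
Local Open Scope classical_set_scope.
Local Open Scope ring_scope.

Lemma compact_locally_compact (T : topologicalType) :
  compact [set: T] -> locally_compact [set: T].
Proof.
move=> cT x _; rewrite withinET; exists setT; first exact: filterT.
by split => //; exact: closedT.
Qed.

Lemma discrete_locally_compact (T : discreteTopologicalType) :
  locally_compact [set: T].
Proof.
move=> x _; rewrite withinET; exists [set x]; first exact: discrete_set1.
by split; [exact: compact_set1 | exact: discrete_closed].
Qed.

Lemma prod_hausdorff (U V : topologicalType) :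
  hausdorff_space U -> hausdorff_space V -> hausdorff_space (U * V)%type.
Proof.
move=> hU hV [p1 p2] [q1 q2] /= cl; congr pair.
- apply: hU => A B nA nB.
  have [|//|[a b] [[/= Aa _] [/= Ba _]]] := cl (A `*` setT) (B `*` setT).
    by exists (A, setT) => //; split => //; exact: filterT.
    by exists (B, setT) => //; split => //; exact: filterT.
  by exists a.
- apply: hV => A B nA nB.
  have [|//|[a b] [[/= _ Ab] [/= _ Bb]]] := cl (setT `*` A) (setT `*` B).
    by exists (setT, A) => //; split => //; exact: filterT.
    by exists (setT, B) => //; split => //; exact: filterT.
  by exists b.
Qed.

Lemma prod_compact (U V : topologicalType) :
  compact [set: U] -> compact [set: V] -> compact [set: U * V]%type.
Proof. by move=> cU cV; rewrite -setXTT; exact: compact_setX. Qed.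

Lemma open_map_fst (U V : topologicalType) : open_map (@fst U V).
Proof. by move=> A; exact: fst_open. Qed.

(* The library gives X * Y a topology and a point, but no instance of their
   join. *)
HB.instance Definition _ (X Y : ptopologicalType) :=
  Pointed.on (X * Y)%type.

Section pair_groupoid.
Variable X : ptopologicalType.

Definition pair_unit (x : X) : X * X := (x, x).
Definition pair_mul (a b : X * X) : X * X := (a.1, b.2).

Lemma groupoid_pair : groupoid fst snd pair_unit pair_mul swap.
Proof. by split => // -[? ?] //= [? ?] // [? ?]. Qed.

Lemma topological_groupoid_pair :
  topological_groupoid fst snd pair_unit pair_mul swap.
Proof.
split; first exact: groupoid_pair.
split; first by move=> ?; exact: cvg_fst.
split; first by move=> ?; exact: cvg_snd.
split; first by move=> x; apply: cvg_pair; exact: cvg_id.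
split; last exact: swap_continuous.
apply: continuous_subspaceT => p.
by apply: cvg_pair; apply: cvg_comp;
  [exact: cvg_fst | exact: cvg_fst | exact: cvg_snd | exact: cvg_snd].
Qed.

End pair_groupoid.

Section finite_measure_disjoint_family.
Context d (T : measurableType d) (R : realType) (mu : {measure set T -> \bar R}).
Context (I : choiceType) (D : set I) (F : I -> set T).
Hypothesis mu_fin : (mu setT < +oo)%E.
Hypothesis mF : forall i, D i -> measurable (F i).
Hypothesis tF : trivIset D F.

Lemma trivIset_measure_ge_finite (e : R) :
  0 < e -> finite_set [set i | D i /\ (e%:E <= mu (F i))%E].
Proof.
move=> e0; apply: contrapT => /infinite_set_fsetP.
pose N := (Num.trunc (fine (mu setT) / e)).+1.
move=> /(_ N) [B BS NB].
have BD : [set` B] `<=` D by move=> i /BS[].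
have mB : forall i, i \in B -> measurable (F i) by move=> i /BD/mF.
have sum_le : (\sum_(i <- B) mu (F i) <= mu setT)%E.
  rewrite -measure_fbigsetU //; last exact: sub_trivIset tF.
  apply: le_measure => //; apply/mem_set.
    by rewrite big_seq; exact: bigsetU_measurable.
  exact: measurableT.
have sum_ge : ((N%:R * e)%:E <= \sum_(i <- B) mu (F i))%E.
  apply: (@le_trans _ _ (\sum_(i <- B) e%:E)%E).
    rewrite sumEFin big_const_seq count_predT iter_addr_0 lee_fin.
    by rewrite -(mulr_natr e) mulrC ler_wpM2l ?(ltW e0) // ler_nat.
  by rewrite !big_seq; apply: lee_sum => i /BS[].
have := le_trans sum_ge sum_le.
rewrite -[mu setT]fineK ?ge0_fin_numE // lee_fin -ler_pdivlMr // leNgt.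
by rewrite truncnS_gt.
Qed.

Lemma trivIset_measure_gt0_countable :
  (forall i, D i -> (0 < mu (F i))%E) -> countable D.
Proof.
move=> F_gt0.
have cover : D `<=` \bigcup_n [set i | D i /\ ((n.+1%:R^-1)%:E <= mu (F i))%E].
  move=> i Di; have Fi_gt0 := F_gt0 i Di.
  have Fi_fin : mu (F i) \is a fin_num.
    rewrite ge0_fin_numE ?measure_ge0 //.
    apply: le_lt_trans mu_fin; apply: le_measure => //; apply/mem_set.
      exact: mF.
    exact: measurableT.
  rewrite -(fineK Fi_fin) lte_fin in Fi_gt0.
  have [n n_lt] := ltr_add_invr Fi_gt0.
  exists n => //; split => //.
  by rewrite -(fineK Fi_fin) lee_fin ltW // -[X in X < _]add0r.
apply: sub_countable (subset_card_le cover) _.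
apply: bigcup_countable => // n _; apply: finite_set_countable.
exact: trivIset_measure_ge_finite.
Qed.

End finite_measure_disjoint_family.

Lemma powerset_not_inj (T : Type) (f : set T -> T) : ~ injective f.
Proof.
move=> f_inj; pose A := [set t | exists2 B, f B = t & ~ B t].
have [AfA | nAfA] := pselect (A (f A)).
  by have [B /f_inj -> nAfA] := AfA; exact: nAfA.
by apply: (nAfA); exists A.
Qed.

Lemma haar_system_pair_isolated_countable {X : ptopologicalType}
    (mu : X -> borel_measure (X * X)%type) :
  compact [set: X] -> haar_system fst snd (@pair_mul X) mu ->
  countable [set x : X | open [set x]].
Proof.
move=> cX [radon_mu supp_mu _ _].
have [nu_cpt _ _] := radon_mu point.
have nu_fin : (mu point setT < +oo)%E by apply: nu_cpt; exact: prod_compact.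
pose F (x : X) : set (X * X) := snd @^-1` [set x].
have F_open x : open [set x] -> open (F x).
  by apply: open_comp => g _; exact: cvg_snd.
apply: (@trivIset_measure_gt0_countable _ _ _ (mu point) _ _ F) => //.
- by move=> x x_open; apply: sub_sigma_algebra; exact: F_open.
- by move=> x y _ _ [g [<- <-]].
- move=> x x_open.
  have : msupport (mu point) (point, x) by rewrite supp_mu.
  by apply => //; exact: F_open.
Qed.

Definition opc_powerset_nat :=
  one_point_compactification (discrete_topology (set nat)).

Lemma opc_powerset_nat_compact : compact [set: opc_powerset_nat].
Proof. exact: one_point_compactification_compact. Qed.

Lemma opc_powerset_nat_hausdorff : hausdorff_space opc_powerset_nat.
Proof.
apply: one_point_compactification_hausdorff; last exact: discrete_hausdorff.
exact: discrete_locally_compact.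
Qed.

Lemma opc_powerset_nat_open_some (A : set nat) :
  open [set Some A : opc_powerset_nat].
Proof.
rewrite -image_set1; apply: one_point_compactification_open_some.
exact: discrete_open.
Qed.

Lemma opc_powerset_nat_isolated_uncountable :
  ~ countable [set x : opc_powerset_nat | open [set x]].
Proof.
move=> /countable_injP [f f_inj].
have isolated_some A : Some A \in [set x : opc_powerset_nat | open [set x]].
  by apply/mem_set; exact: opc_powerset_nat_open_some.
apply: (@powerset_not_inj nat (f \o Some)) => A B /= fAB.
by case: (f_inj _ _ (isolated_some A) (isolated_some B) fAB).
Qed.

Theorem proposition2p2 :
  exists (G X : ptopologicalType) (r s : G -> X) (e : X -> G)
         (m : G -> G -> G) (i : G -> G),
    [/\ locally_compact_groupoid r s e m i,
        compact [set: G],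
        open_map r &
        ~ (exists mu : X -> borel_measure G, haar_system r s m mu)].
Proof.
pose X := opc_powerset_nat.
have cX := opc_powerset_nat_compact.
have hX := opc_powerset_nat_hausdorff.
have cG : compact [set: X * X] by exact: prod_compact.
exists (X * X)%type, X, fst, snd, (@pair_unit X), (@pair_mul X), swap.
split.
- split; first exact: topological_groupoid_pair.
  + exact: prod_hausdorff.
  + exact: compact_locally_compact.
  + exact: hX.
  + exact: compact_locally_compact.
- exact: cG.
- exact: open_map_fst.
- move=> [mu /(haar_system_pair_isolated_countable _ cX)].
  exact: opc_powerset_nat_isolated_uncountable.
Qed.
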